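(* Let $R=\mathbb{R}$ or $\mathbb{C}$. The following statements are equivalent: (a) for all convergence spaces $X,Y$ and all continuous linear functionals $\mu:[X,R]\to R$, $\nu:[Y,R]\to R$, there is a unique continuous linear functional $\mu\otimes\nu:[X\times Y,R]\to R$ with $\nu(\lambda y.\mu(\lambda x.f(x,y)))=(\mu\otimes\nu)(f)=\mu(\lambda x.\nu(\lambda y.f(x,y)))$ for all continuous $f:X\times Y\to R$ (in particular with the inner functions continuous); (b) the natural distribution monad $\mathbb{D}$ on $\mathbf{Conv}$ is commutative.
   Context: $\mathbf{Conv}$ is the cartesian closed category of convergence spaces; for a convergence space $Z$, $[Z,R]$ is the space of continuous maps $Z\to R$ with continuous convergence and pointwise vector space structure (a convergence vector space). For a convergence vector space $E$, $E^*$ denotes the space of continuous linear functionals $E\to R$ with continuous convergence. The natural distribution monad $\mathbb{D}=(\mathbf{D},\delta,\kappa)$ on $\mathbf{Conv}$ (as a $\mathbf{Conv}$-enriched monad) is the monad induced by the enriched adjunction $[-,R]\dashv(-)^*$ between $\mathbf{Conv}$ and the opposite of the $\mathbf{Conv}$-enriched category of convergence vector spaces: $DX=[X,R]^*$; for $g:X\to Y$, $Dg(\mu)=\lambda h.\mu(h\circ g)$, the enrichment being the continuous map $g\mapsto Dg$; $\delta_X(x)=\lambda f.f(x)$ (Dirac functional); $\kappa_X=(\sigma_{[X,R]})^*:[DX,R]^*\to[X,R]^*$ where $\sigma_E:E\to[E^*,R]$, $\sigma_E(e)=\lambda\phi.\phi(e)$. Commutativity (Kock): with strengths $t'_{XY}:DX\times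 Y\to D(X\times Y)$, $t'(\mu,y)=\lambda f.\mu(\lambda x.f(x,y))$ and $t''_{XY}:X\times DY\to D(X\times Y)$, $t''(x,\nu)=\lambda f.\nu(\lambda y.f(x,y))$ (the strengths induced by the enrichment), $\mathbb{D}$ is commutative if $\kappa\circ Dt'_{XY}\circ t''_{DX,Y}=\kappa\circ Dt''_{XY}\circ t'_{X,DY}$ for all $X,Y$. *)

From HB Require Import structures.
From mathcomp Require Import all_boot all_algebra.
From mathcomp Require Import classical_sets boolp filter reals topology normedtype.
From mathcomp Require Export complex.
Export numFieldNormedType.Exports.

Set Implicit Arguments.
Unset Strict Implicit.
Unset Printing Implicit Defensive.

Import GRing.Theory Num.Theory.
Local Open Scope classical_set_scope.
Local Open Scope ring_scope.

(** * Convergence spaces                                                     *)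
(* Only proper filters are ever queried.                                     *)
Record convSpace := ConvSpace {
  cs_car :> Type;
  cs_conv : set_system cs_car -> cs_car -> Prop;
  cs_conv_pt : forall x, cs_conv (principal_filter x) x;
  cs_conv_up : forall (F G : set_system cs_car) x,
    ProperFilter F -> ProperFilter G -> F `<=` G -> cs_conv F x -> cs_conv G x;
  cs_conv_cap : forall (F G : set_system cs_car) x,
    ProperFilter F -> ProperFilter G -> cs_conv F x -> cs_conv G x ->
    cs_conv (F `&` G) x }.

Definition cs_continuous (X Y : convSpace) (f : X -> Y) : Prop :=
  forall (F : set_system X) (x : X), ProperFilter F ->
    cs_conv F x -> cs_conv (fmap f F) (f x).

Record cmap (X Y : convSpace) := CMap {
  cm_fun :> X -> Y;
  cm_cont : cs_continuous cm_fun }.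

Lemma fmap_sub T U (f : T -> U) (F G : set_system T) :
  F `<=` G -> fmap f F `<=` fmap f G.
Proof. by move=> FG A; apply: FG. Qed.

Lemma conv_upP (X : convSpace) (F G : set_system X) (x : X) :
  ProperFilter F -> ProperFilter G -> cs_conv F x -> F `<=` G -> cs_conv G x.
Proof. by move=> PF PG h FG; exact: (cs_conv_up PF PG FG h). Qed.

Lemma conv_pt_up (X : convSpace) (G : set_system X) (x : X) :
  ProperFilter G -> (forall A, A x -> G A) -> cs_conv G x.
Proof.
move=> PG h; apply: (conv_upP (principal_filter_proper x) PG (cs_conv_pt x)).
by move=> A /principal_filterP; apply: h.
Qed.

Section Product.
Variables X Y : convSpace.

Definition prod_conv (F : set_system (X * Y)) (p : X * Y) : Prop :=
  cs_conv (fmap fst F) p.1 /\ cs_conv (fmap snd F) p.2.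

Lemma prod_conv_pt p : prod_conv (principal_filter p) p.
Proof.
have PP := principal_filter_proper p.
case: p PP => x y PP; split=> /=; apply: conv_pt_up => A Ax;
  exact/principal_filterP.
Qed.

Lemma prod_conv_up (F G : set_system (X * Y)) p :
  ProperFilter F -> ProperFilter G -> F `<=` G -> prod_conv F p -> prod_conv G p.
Proof.
move=> PF PG FG [h1 h2]; split.
- exact: (conv_upP (fmap_proper_filter fst PF) (fmap_proper_filter fst PG) h1 (fmap_sub (f:=fst) FG)).
- exact: (conv_upP (fmap_proper_filter snd PF) (fmap_proper_filter snd PG) h2 (fmap_sub (f:=snd) FG)).
Qed.

Lemma prod_conv_cap (F G : set_system (X * Y)) p :
  ProperFilter F -> ProperFilter G -> prod_conv F p -> prod_conv G p ->
  prod_conv (F `&` G) p.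
Proof.
move=> PF PG [f1 f2] [g1 g2]; split.
- exact: (cs_conv_cap _ _ f1 g1).
- exact: (cs_conv_cap _ _ f2 g2).
Qed.

Definition prodS : convSpace :=
  ConvSpace prod_conv_pt prod_conv_up prod_conv_cap.
End Product.

Section Subspace.
Variables (Z : convSpace) (P : Z -> Prop).

Definition sub_conv (F : set_system {z : Z | P z}) (x : {z : Z | P z}) : Prop :=
  cs_conv (fmap (@proj1_sig _ _) F) (proj1_sig x).

Lemma sub_conv_pt x : sub_conv (principal_filter x) x.
Proof.
have PP := principal_filter_proper x.
by apply: conv_pt_up => A Ax; apply/principal_filterP.
Qed.

Lemma sub_conv_up (F G : set_system {z : Z | P z}) x :
  ProperFilter F -> ProperFilter G -> F `<=` G -> sub_conv F x -> sub_conv G x.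
Proof.
move=> PF PG FG h.
exact: (conv_upP (fmap_proper_filter _ PF) (fmap_proper_filter _ PG) h
          (fmap_sub (f:=@proj1_sig _ _) FG)).
Qed.

Lemma sub_conv_cap (F G : set_system {z : Z | P z}) x :
  ProperFilter F -> ProperFilter G -> sub_conv F x -> sub_conv G x ->
  sub_conv (F `&` G) x.
Proof. by move=> PF PG f1 g1; exact: (cs_conv_cap _ _ f1 g1). Qed.

Definition subS : convSpace := ConvSpace sub_conv_pt sub_conv_up sub_conv_cap.
End Subspace.

Section Scalars.
Variable K : numFieldType.

Definition K_conv (F : set_system K) (k : K) : Prop := F --> k.

Lemma K_conv_pt k : K_conv (principal_filter k) k.
Proof. by move=> A /nbhs_singleton Ak; apply/principal_filterP. Qed.

Lemma K_conv_up (F G : set_system K) k :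
  ProperFilter F -> ProperFilter G -> F `<=` G -> K_conv F k -> K_conv G k.
Proof. by move=> _ _ FG h A /h /FG. Qed.

Lemma K_conv_cap (F G : set_system K) k :
  ProperFilter F -> ProperFilter G -> K_conv F k -> K_conv G k ->
  K_conv (F `&` G) k.
Proof. by move=> _ _ h1 h2 A hA; split; [apply: h1|apply: h2]. Qed.

Definition KS : convSpace := ConvSpace K_conv_pt K_conv_up K_conv_cap.

(** [Z, K] : continuous maps Z -> K with continuous convergence *)
Section FunSpace.
Variable Z : convSpace.

Definition evf (p : cmap Z KS * Z) : K := p.1 p.2.

Definition fun_conv (Phi : set_system (cmap Z KS)) (f : cmap Z KS) : Prop :=
  forall (z : Z) (F : set_system Z), ProperFilter F -> cs_conv F z ->
    fmap evf (filter_prod Phi F) --> (f z : K).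

Lemma fun_conv_pt f : fun_conv (principal_filter f) f.
Proof.
move=> z F PF hz A hA.
have hfA : F (f @^-1` A) := cm_cont f PF hz A hA.
exists ([set f], f @^-1` A); first by split=> //; apply/principal_filterP.
by move=> [g x] [/= -> fx].
Qed.

Lemma fun_conv_up (Phi Psi : set_system (cmap Z KS)) f :
  ProperFilter Phi -> ProperFilter Psi -> Phi `<=` Psi ->
  fun_conv Phi f -> fun_conv Psi f.
Proof.
move=> _ _ PP h z F PF hz A hA.
have [[P Q] [/= HP HQ] sPQ] := h z F PF hz A hA.
by exists (P, Q) => //; split => //; apply: PP.
Qed.

Lemma fun_conv_cap (Phi Psi : set_system (cmap Z KS)) f :
  ProperFilter Phi -> ProperFilter Psi ->
  fun_conv Phi f -> fun_conv Psi f -> fun_conv (Phi `&` Psi) f.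
Proof.
move=> PPhi PPsi h1 h2 z F PF hz A hA.
have [[P1 Q1] [/= HP1 HQ1] s1] := h1 z F PF hz A hA.
have [[P2 Q2] [/= HP2 HQ2] s2] := h2 z F PF hz A hA.
exists (P1 `|` P2, Q1 `&` Q2).
  split=> /=; last exact: filterI.
  split.
    by apply: filterS HP1; apply: subsetUl.
  by apply: filterS HP2; apply: subsetUr.
move=> [g x] [/= [Pg|Pg] [q1 q2]]; [exact: (s1 (g, x))|exact: (s2 (g, x))].
Qed.

Definition FunS : convSpace := ConvSpace fun_conv_pt fun_conv_up fun_conv_cap.
End FunSpace.
End Scalars.

Section Morphisms.

Lemma comp_cont (X Y Z : convSpace) (g : cmap Y Z) (f : cmap X Y) :
  cs_continuous (fun x => g (f x)).
Proof.
move=> F x PF h.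
exact: (cm_cont g (fmap_proper_filter _ PF) (cm_cont f PF h)).
Qed.
Definition cm_comp (X Y Z : convSpace) (g : cmap Y Z) (f : cmap X Y) : cmap X Z :=
  CMap (comp_cont g f).

Lemma id_cont (X : convSpace) : cs_continuous (fun x : X => x).
Proof. move=> F x PF h; exact: h. Qed.
Definition cm_id (X : convSpace) : cmap X X := CMap (@id_cont X).

Lemma fst_cont (X Y : convSpace) : cs_continuous (fun p : prodS X Y => p.1).
Proof. by move=> F p PF [h1 h2]. Qed.
Definition cm_fst (X Y : convSpace) : cmap (prodS X Y) X := CMap (@fst_cont X Y).

Lemma snd_cont (X Y : convSpace) : cs_continuous (fun p : prodS X Y => p.2).
Proof. by move=> F p PF [h1 h2]. Qed.
Definition cm_snd (X Y : convSpace) : cmap (prodS X Y) Y := CMap (@snd_cont X Y).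

Lemma pair_cont (A X Y : convSpace) (f : cmap A X) (g : cmap A Y) :
  cs_continuous (fun a => (f a, g a) : prodS X Y).
Proof. by move=> F a PF h; do 2 red; split; [exact: (cm_cont f PF h)|exact: (cm_cont g PF h)]. Qed.
Definition cm_pair (A X Y : convSpace) (f : cmap A X) (g : cmap A Y) :
  cmap A (prodS X Y) := CMap (pair_cont f g).

Lemma const_cont (A X : convSpace) (c : X) : cs_continuous (fun _ : A => c).
Proof.
move=> F a PF h; apply: conv_pt_up => B Bc.
rewrite fmapE; apply: (@filterS _ F _ setT); last exact: filterT.
by move=> x _ /=.
Qed.
Definition cm_const (A X : convSpace) (c : X) : cmap A X := CMap (@const_cont A X c).

Lemma val_cont (Z : convSpace) (P : Z -> Prop) :
  cs_continuous (fun x : subS P => proj1_sig x).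
Proof. by move=> F x PF h. Qed.
Definition cm_val (Z : convSpace) (P : Z -> Prop) : cmap (subS P) Z :=
  CMap (@val_cont Z P).

Lemma corestrict_cont (A Z : convSpace) (P : Z -> Prop) (f : cmap A Z)
  (Hf : forall a, P (f a)) : cs_continuous (fun a => exist P (f a) (Hf a) : subS P).
Proof. by move=> F a PF h; exact: (cm_cont f PF h). Qed.
Definition cm_corestrict (A Z : convSpace) (P : Z -> Prop) (f : cmap A Z)
  (Hf : forall a, P (f a)) : cmap A (subS P) := CMap (corestrict_cont Hf).

End Morphisms.

Section Closed.
Variable K : numFieldType.

Lemma ev_cont (Z : convSpace) :
  cs_continuous (fun p : prodS (FunS K Z) Z => evf p : KS K).
Proof.
move=> F [f z] PF [h1 h2] A hA.
have [[P Q] [/= HP HQ] s] :=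
  h1 z _ (fmap_proper_filter _ PF) h2 A hA.
apply: filterS (filterI HP HQ) => x [Px Qx].
exact: (s x).
Qed.
Definition cm_ev (Z : convSpace) : cmap (prodS (FunS K Z) Z) (KS K) :=
  CMap (@ev_cont Z).

Definition curry_pt (A B : convSpace) (h : cmap (prodS A B) (KS K)) (a : A) :
  cmap B (KS K) := cm_comp h (cm_pair (cm_const B a) (cm_id B)).

Lemma curry_cont (A B : convSpace) (h : cmap (prodS A B) (KS K)) :
  cs_continuous (fun a => curry_pt h a : FunS K B).
Proof.
move=> F a PF hF z G PG hG C hC.
have hp : @cs_conv (prodS A B) (filter_prod F G) (a, z).
  do 2 red; split.
  - apply: (conv_upP PF (fmap_proper_filter _ filter_prod_proper) hF).
    move=> P HP; exists (P, setT); first by split=> //; exact: filterT.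
    by move=> [x y] [].
  - apply: (conv_upP PG (fmap_proper_filter _ filter_prod_proper) hG).
    move=> P HP; exists (setT, P); first by split=> //; exact: filterT.
    by move=> [x y] [].
have [[P Q] [/= HP HQ] s] := cm_cont h filter_prod_proper hp C hC.
exists (curry_pt h @` P, Q).
  by split=> //=; apply: filterS HP => x Px; exists x.
by move=> [phi y] [/= [x Px <-] Qy]; exact: (s (x, y)).
Qed.
Definition cm_curry (A B : convSpace) (h : cmap (prodS A B) (KS K)) :
  cmap A (FunS K B) := CMap (@curry_cont A B h).

End Closed.

(** * The natural distribution monad D X = [X,K]^* *)
Section Distributions.
Variable K : numFieldType.

(* linearity for the pointwise vector space structure of [X,K]:             *)
(* mu (a f + g) = a mu(f) + mu(g), where h is the pointwise a f + g          *)
Definition is_linear_fun (X : convSpace) (mu : FunS K X -> K) : Prop :=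
  forall (a : K) (f g h : FunS K X),
    (forall x, (h x : K) = a * (f x : K) + (g x : K)) -> mu h = a * mu f + mu g.

(* E^* for E = [X,K]: continuous linear functionals [X,K] -> K, with the     *)
(* continuous convergence (i.e. as a subspace of [[X,K],K]).                 *)
Definition DS (X : convSpace) : convSpace :=
  subS (fun mu : FunS K (FunS K X) => is_linear_fun (cm_fun mu)).

Definition precomp (X Y : convSpace) (g : cmap X Y) : cmap (FunS K Y) (FunS K X) :=
  cm_curry (cm_comp (cm_ev K Y)
    (cm_pair (cm_fst (FunS K Y) X) (cm_comp g (cm_snd (FunS K Y) X)))).

Lemma Dmap_lin (X Y : convSpace) (g : cmap X Y) (mu : DS X) :
  is_linear_fun (cm_fun (cm_comp (proj1_sig mu) (precomp g))).
Proof. by move=> a f f' h Hh; apply: (proj2_sig mu) => x; exact: Hh. Qed.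

Definition Dmap (X Y : convSpace) (g : cmap X Y) (mu : DS X) : DS Y :=
  exist _ (cm_comp (proj1_sig mu) (precomp g)) (Dmap_lin g mu).

(* sigma_E : E -> [E^*, K], e |-> (phi |-> phi e), for E = [X,K] *)
Definition sigmaE (X : convSpace) : cmap (FunS K X) (FunS K (DS X)) :=
  cm_curry (cm_comp (cm_ev K (FunS K X))
    (cm_pair (cm_comp (cm_val _) (cm_snd (FunS K X) (DS X)))
             (cm_fst (FunS K X) (DS X)))).

Lemma kappa_lin (X : convSpace) (Xi : DS (DS X)) :
  is_linear_fun (cm_fun (cm_comp (proj1_sig Xi) (sigmaE X))).
Proof.
move=> a f g h Hh; apply: (proj2_sig Xi) => mu.
exact: (proj2_sig mu).
Qed.

Definition kappa (X : convSpace) (Xi : DS (DS X)) : DS X :=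
  exist _ (cm_comp (proj1_sig Xi) (sigmaE X)) (kappa_lin Xi).

(* (f, y) |-> (x |-> f (x, y)) *)
Definition sectY (X Y : convSpace) :
  cmap (prodS (FunS K (prodS X Y)) Y) (FunS K X) :=
  cm_curry (cm_comp (cm_ev K (prodS X Y))
    (cm_pair (cm_comp (cm_fst _ _) (cm_fst _ _))
             (cm_pair (cm_snd _ _) (cm_comp (cm_snd _ _) (cm_fst _ _))))).

(* (f, x) |-> (y |-> f (x, y)) *)
Definition sectX (X Y : convSpace) :
  cmap (prodS (FunS K (prodS X Y)) X) (FunS K Y) :=
  cm_curry (cm_comp (cm_ev K (prodS X Y))
    (cm_pair (cm_comp (cm_fst _ _) (cm_fst _ _))
             (cm_pair (cm_comp (cm_snd _ _) (cm_fst _ _)) (cm_snd _ _)))).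

Definition tp_raw (X Y : convSpace) :
  cmap (prodS (prodS (DS X) Y) (FunS K (prodS X Y))) (KS K) :=
  cm_comp (cm_ev K (FunS K X))
    (cm_pair (cm_comp (cm_val _) (cm_comp (cm_fst _ _) (cm_fst _ _)))
             (cm_comp (sectY X Y)
                (cm_pair (cm_snd _ _) (cm_comp (cm_snd _ _) (cm_fst _ _))))).

Lemma tp_lin (X Y : convSpace) (p : prodS (DS X) Y) :
  is_linear_fun (cm_fun (cm_curry (tp_raw X Y) p)).
Proof.
by move=> a f g h Hh; apply: (proj2_sig p.1) => x; exact: Hh.
Qed.

(* strength t'_{XY} : DX x Y -> D(X x Y), t'(mu, y) = fun f => mu (fun x => f (x, y)) *)
Definition tp (X Y : convSpace) : cmap (prodS (DS X) Y) (DS (prodS X Y)) :=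
  cm_corestrict (@tp_lin X Y).

Definition tpp_raw (X Y : convSpace) :
  cmap (prodS (prodS X (DS Y)) (FunS K (prodS X Y))) (KS K) :=
  cm_comp (cm_ev K (FunS K Y))
    (cm_pair (cm_comp (cm_val _) (cm_comp (cm_snd _ _) (cm_fst _ _)))
             (cm_comp (sectX X Y)
                (cm_pair (cm_snd _ _) (cm_comp (cm_fst _ _) (cm_fst _ _))))).

Lemma tpp_lin (X Y : convSpace) (p : prodS X (DS Y)) :
  is_linear_fun (cm_fun (cm_curry (tpp_raw X Y) p)).
Proof.
by move=> a f g h Hh; apply: (proj2_sig p.2) => y; exact: Hh.
Qed.

(* strength t''_{XY} : X x DY -> D(X x Y), t''(x, nu) = fun f => nu (fun y => f (x, y)) *)
Definition tpp (X Y : convSpace) : cmap (prodS X (DS Y)) (DS (prodS X Y)) :=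
  cm_corestrict (@tpp_lin X Y).

Definition D_commutative : Prop :=
  forall (X Y : convSpace) (p : prodS (DS X) (DS Y)),
    kappa (Dmap (tp X Y) (tpp (DS X) Y p)) =
    kappa (Dmap (tpp X Y) (tp X (DS Y) p)).

(* the continuous inner function  y |-> mu (fun x => f (x, y)) *)
Definition inner_l (X Y : convSpace) (mu : DS X) (f : FunS K (prodS X Y)) :
  FunS K Y :=
  cm_comp (cm_ev K (FunS K X))
    (cm_pair (cm_const Y (proj1_sig mu))
             (cm_comp (sectY X Y) (cm_pair (cm_const Y f) (cm_id Y)))).

(* the continuous inner function  x |-> nu (fun y => f (x, y)) *)
Definition inner_r (X Y : convSpace) (nu : DS Y) (f : FunS K (prodS X Y)) :
  FunS K X :=
  cm_comp (cm_ev K (FunS K Y))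
    (cm_pair (cm_const X (proj1_sig nu))
             (cm_comp (sectX X Y) (cm_pair (cm_const X f) (cm_id X)))).

Definition tensor_products_exist : Prop :=
  forall (X Y : convSpace) (mu : DS X) (nu : DS Y),
    exists! m : DS (prodS X Y),
      forall f : FunS K (prodS X Y),
        proj1_sig nu (inner_l mu f) = proj1_sig m f /\
        proj1_sig m f = proj1_sig mu (inner_r nu f).

End Distributions.

Section Sanity.
Variable K : numFieldType.
Variables X Y : convSpace.
Example tp_val (mu : DS K X) (y : Y) (f : FunS K (prodS X Y)) :
  proj1_sig (tp K X Y (mu, y)) f = proj1_sig mu (sectY K X Y (f, y)).
Proof. by []. Qed.
Example sectY_val (f : FunS K (prodS X Y)) y x : sectY K X Y (f, y) x = f (x, y).
Proof. by []. Qed.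
Example inner_l_val (mu : DS K X) (f : FunS K (prodS X Y)) y :
  inner_l mu f y = proj1_sig mu (sectY K X Y (f, y)).
Proof. by []. Qed.
Example kappa_val (Xi : DS K (DS K X)) (f : FunS K X) :
  proj1_sig (kappa Xi) f = proj1_sig Xi (sigmaE K X f).
Proof. by []. Qed.
Example sigma_val (f : FunS K X) (mu : DS K X) : sigmaE K X f mu = proj1_sig mu f.
Proof. by []. Qed.
Example Dmap_val (g : cmap X Y) (mu : DS K X) (h : FunS K Y) :
  proj1_sig (Dmap g mu) h = proj1_sig mu (precomp K g h).
Proof. by []. Qed.
Example precomp_val (g : cmap X Y) (h : FunS K Y) x : precomp K g h x = h (g x).
Proof. by []. Qed.
End Sanity.

From HB Require Import structures.
From mathcomp Require Import all_boot all_algebra.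
From mathcomp Require Import classical_sets boolp filter reals topology normedtype.
From mathcomp Require Import complex.
Set Implicit Arguments.

(* Unfolding kappa, D and the strengths, the two composites in Kock's
   condition send f to nu (fun y => mu (fun x => f (x, y))) and to
   mu (fun x => nu (fun y => f (x, y))) respectively.  Commutativity thus says
   exactly that these two iterated functionals coincide, and their common value
   is then the unique tensor product, since a distribution is determined by
   its values.  Nothing depends on the scalar field. *)

Lemma cmap_ext (X Y : convSpace) (f g : cmap X Y) : f =1 g -> f = g.
Proof.
case: f g => f hf [g hg] /= efg.
have e : f = g by apply: funext.
by subst g; congr CMap; exact: Prop_irrelevance.
Qed.

Section DistributionTensor.
Variable K : numFieldType.

Lemma distr_ext (X : convSpace) (m n : DS K X) :
  (forall f, proj1_sig m f = proj1_sig n f) -> m = n.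
Proof.
case: m n => m hm [n hn] /= emn.
have e : m = n by apply: cmap_ext.
by subst n; congr exist; exact: Prop_irrelevance.
Qed.

Lemma distr_congr (X : convSpace) (m : DS K X) (g h : FunS K X) :
  g =1 h -> proj1_sig m g = proj1_sig m h.
Proof. by move/cmap_ext->. Qed.

Variables X Y : convSpace.

Definition tensor_l (mu : DS K X) (nu : DS K Y) : DS K (prodS X Y) :=
  kappa (Dmap (tp K X Y) (tpp K (DS K X) Y (mu, nu))).

Definition tensor_r (mu : DS K X) (nu : DS K Y) : DS K (prodS X Y) :=
  kappa (Dmap (tpp K X Y) (tp K X (DS K Y) (mu, nu))).

Lemma tensor_lE mu nu f : proj1_sig (tensor_l mu nu) f = proj1_sig nu (inner_l mu f).
Proof. by rewrite /tensor_l /=; apply: distr_congr. Qed.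

Lemma tensor_rE mu nu f : proj1_sig (tensor_r mu nu) f = proj1_sig mu (inner_r nu f).
Proof. by rewrite /tensor_r /=; apply: distr_congr. Qed.

Lemma tensor_l_unique (mu : DS K X) (nu : DS K Y) (m : DS K (prodS X Y)) :
  (forall f, proj1_sig nu (inner_l mu f) = proj1_sig m f) -> m = tensor_l mu nu.
Proof. by move=> hm; apply: distr_ext => f; rewrite tensor_lE hm. Qed.

End DistributionTensor.

Lemma tensor_products_existE (K : numFieldType) :
  tensor_products_exist K <-> D_commutative K.
Proof.
split=> [tensor X Y [mu nu] | comm X Y mu nu].
- have [m [hm _]] := tensor X Y mu nu.
  apply: distr_ext => f.
  by rewrite -/(tensor_l mu nu) -/(tensor_r mu nu) tensor_lE tensor_rE; case: (hm f) => -> ->.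
- have lr : tensor_l mu nu = tensor_r mu nu by exact: comm.
  exists (tensor_l mu nu); split=> [f | m hm].
    by split; [rewrite tensor_lE | rewrite lr; exact: tensor_rE].
  by apply/esym/tensor_l_unique => f; case: (hm f).
Qed.

Theorem lemma9p5 (R : realType) :
  (tensor_products_exist R <-> D_commutative R) /\
  (tensor_products_exist (R[i] : numFieldType) <-> D_commutative (R[i] : numFieldType)).
Proof. by split; apply: tensor_products_existE. Qed.
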